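(* Consider an implication of canonical form $(\ast)$ and an environment $\eta$. Let $L=\{(i,j)\mid1\le i\le M,1\le j\le N\}$. Suppose (S1) for all $(i,j)\in L$ with $\Pi(i)\not\ge\Omega(j)$ there is $c\in V$ with $\Pi(i)(c)<\Omega(j)(c)$ and such that $\Pi(k)(c)=\Omega(l)(c)$ for every $(k,l)\in L$ with $\Pi(k)\ge\Omega(l)$; and (S2) for every $1\le j\le N$ there is $c\in V$ with $\Omega(j)(c)>0$ and such that $\Pi(k)(c)=\Omega(l)(c)$ for every $(k,l)\in L$ with $\Pi(k)\ge\Omega(l)$. If the implication is unary $\eta$-valid, then the Parametricity Condition holds for it and $\eta$ (and hence, by the preceding proposition, it is binary $\eta$-valid).
   Context: $\mathsf{Heap}$: finite partial functions $\mathsf{PosInt}\to\mathsf{Int}$; $g\sqsubseteq h$ means $h$ extends $g$; $h\cdot g$ union of disjoint heaps; componentwise on $\mathsf{Heap}^n$. $\mathsf{IRel}_n$: upward closed subsets of $\mathsf{Heap}^n$; $p*q=\{\mathbf f\cdot\mathbf g\mid\mathbf f\in p,\mathbf g\in q,\text{componentwise disjoint}\}$; $\Delta_n(X)=\{(h_1,\dots,h_n)\mid\exists f\in X.\ \forall k.\ f\sqsubseteq h_k\}$. Assertions: built from primitive assertions $P$, assertion variables, $\mathsf{true},\mathsf{false},\wedge,\vee,*$, quantifiers over integer variables. $n$-ary meaning under $\eta$ and $\rho:\mathsf{AVar}\to\mathsf{IRel}_n$: $[\![P]\!]^n=\Delta_n([\![P]\!]^{\mathrm{prim}}_\eta)$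 (standard meaning $[\![P]\!]^{\mathrm{prim}}_\eta\subseteq\mathsf{Heap}$), $[\![a]\!]^n=\rho(a)$, connectives by $\mathsf{Heap}^n,\emptyset,\cap,\cup,*$, quantifiers by unions/intersections. $n$-ary $\eta$-validity of $\varphi\Rightarrow\psi$: $[\![\varphi]\!]^n_{\eta,\rho}\subseteq[\![\psi]\!]^n_{\eta,\rho}$ for all $\rho:\mathsf{AVar}\to\mathsf{IRel}_n$ (unary: $n=1$, binary: $n=2$). Canonical form $(\ast)$: $\bigwedge_{i=1}^M\varphi_i*a_{i,1}*\cdots*a_{i,M_i}\Rightarrow\bigvee_{j=1}^N\psi_j*b_{j,1}*\cdots*b_{j,N_j}$, $M\ge1$, $N\ge0$, $\varphi_i,\psi_j$ free of assertion variables, every $b_{j,k}$ among the $a_{i,k}$. $V=\{a_{i,k}\}$; $\Pi(i)(c)=|\{k\mid a_{i,k}=c\}|$, $\Omega(j)(c)=|\{k\mid b_{j,k}=c\}|$; $\Pi(i)\ge\Omega(j)$ iff $\Pi(i)(c)\ge\Omega(j)(c)$ for all $c\in V$, and $\Pi(i)\not\ge\Omega(j)$ otherwise. Disjunct $j$ is empty if $N_j=0$. Parametricity Condition: for all $h,h_1,\dots,h_M\in\mathsf{Heap}$ with $h_i\sqsubseteq h$ and $h_i\in[\![\varphi_i]\!]^1_\eta$ for all $i$, either (1) there are $i,j$ with $h_i\in[\![\psi_j]\!]^1_\eta$ and $\Pi(i)\ge\Omega(j)$, or (2) there is an empty disjunct $j$ with $h\in[\![\psi_j]\!]^1_\eta$.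 *)

From Stdlib Require Import ZArith List PeanoNat Fin.
Import ListNotations.
Set Implicit Arguments.

Definition heap : Type :=
  { f : positive -> option Z | exists l : list positive, forall p, f p <> None -> In p l }.

Definition hget (h : heap) : positive -> option Z := proj1_sig h.

Definition hsub (g h : heap) : Prop :=
  forall p v, hget g p = Some v -> hget h p = Some v.

Definition hdisj (g f : heap) : Prop :=
  forall p, hget g p = None \/ hget f p = None.

Definition hunion (g f h : heap) : Prop :=
  hdisj g f /\
  forall p, hget h p = match hget g p with Some v => Some v | None => hget f p end.

Definition hvec (n : nat) : Type := Fin.t n -> heap.

Definition upclosed (n : nat) (p : hvec n -> Prop) : Prop :=
  forall g h, p g -> (forall k, hsub (g k) (h k)) -> p h.

Inductive assertion (Prim : Type) : Type :=
| APrim : Prim -> assertion Prim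
| AVar  : nat -> assertion Prim
| ATrue : assertion Prim
| AFalse : assertion Prim
| AAnd  : assertion Prim -> assertion Prim -> assertion Prim
| AOr   : assertion Prim -> assertion Prim -> assertion Prim
| AStar : assertion Prim -> assertion Prim -> assertion Prim
| AEx   : nat -> assertion Prim -> assertion Prim
| AAll  : nat -> assertion Prim -> assertion Prim.

Arguments ATrue {Prim}.
Arguments AFalse {Prim}.
Arguments AVar {Prim} _.

Fixpoint avar_free (Prim : Type) (a : assertion Prim) : Prop :=
  match a with
  | APrim _ => True
  | AVar _ => False
  | ATrue | AFalse => True
  | AAnd a b | AOr a b | AStar a b => avar_free a /\ avar_free b
  | AEx _ a | AAll _ a => avar_free a
  end.

Definition env := nat -> Z.
Definition upd (eta : env) (x : nat) (v : Z) : env :=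
  fun y => if Nat.eqb y x then v else eta y.

(* n-ary meaning; prim_sem P eta is the standard meaning [[P]]^prim_eta ⊆ Heap *)
Fixpoint sem (Prim : Type) (prim_sem : Prim -> env -> heap -> Prop) (n : nat)
  (rho : nat -> hvec n -> Prop) (a : assertion Prim) (eta : env) (h : hvec n) : Prop :=
  match a with
  | APrim P => exists f, prim_sem P eta f /\ forall k, hsub f (h k)
  | AVar x => rho x h
  | ATrue => True
  | AFalse => False
  | AAnd a b => sem prim_sem rho a eta h /\ sem prim_sem rho b eta h
  | AOr a b => sem prim_sem rho a eta h \/ sem prim_sem rho b eta h
  | AStar a b => exists f g : hvec n,
      sem prim_sem rho a eta f /\ sem prim_sem rho b eta g /\
      forall k, hunion (f k) (g k) (h k)
  | AEx x a => exists v : Z, sem prim_sem rho a (upd eta x v) h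
  | AAll x a => forall v : Z, sem prim_sem rho a (upd eta x v) h
  end.

Definition nvalid (Prim : Type) (prim_sem : Prim -> env -> heap -> Prop) (n : nat)
  (phi psi : assertion Prim) (eta : env) : Prop :=
  forall rho : nat -> hvec n -> Prop, (forall x, upclosed (rho x)) ->
  forall h, sem prim_sem rho phi eta h -> sem prim_sem rho psi eta h.

Definition unary_valid (Prim : Type) prim_sem (phi psi : assertion Prim) eta :=
  @nvalid Prim prim_sem 1 phi psi eta.

(* unary meaning [[phi]]^1_eta of an assertion-variable-free phi, as a set of heaps
   (rho is irrelevant for such phi; we fix it to the full relation). *)
Definition sem1 (Prim : Type) prim_sem (phi : assertion Prim) (eta : env) (h : heap) : Prop :=
  @sem Prim prim_sem 1 (fun _ _ => True) phi eta (fun _ => h).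

(* lhs = [(phi_1,[a_11;..;a_1M1]); ...; (phi_M, ...)]
   rhs = [(psi_1,[b_11;..;b_1N1]); ...; (psi_N, ...)] *)
Definition clause (Prim : Type) : Type := (assertion Prim * list nat)%type.

Definition star_vars (Prim : Type) (c : clause Prim) : assertion Prim :=
  fold_left (fun acc a => AStar acc (AVar a)) (snd c) (fst c).

Fixpoint big_and (Prim : Type) (l : list (assertion Prim)) : assertion Prim :=
  match l with
  | [] => ATrue
  | [x] => x
  | x :: xs => AAnd x (big_and xs)
  end.

Fixpoint big_or (Prim : Type) (l : list (assertion Prim)) : assertion Prim :=
  match l with
  | [] => AFalse
  | [x] => x
  | x :: xs => AOr x (big_or xs)
  end.

Definition canon_lhs (Prim : Type) (lhs : list (clause Prim)) : assertion Prim :=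
  big_and (map (@star_vars Prim) lhs).
Definition canon_rhs (Prim : Type) (rhs : list (clause Prim)) : assertion Prim :=
  big_or (map (@star_vars Prim) rhs).

Definition canonical (Prim : Type) (lhs rhs : list (clause Prim)) : Prop :=
  lhs <> [] /\
  (forall c, In c lhs -> avar_free (fst c)) /\
  (forall c, In c rhs -> avar_free (fst c)) /\
  (forall c b, In c rhs -> In b (snd c) -> exists c', In c' lhs /\ In b (snd c')).

Section Canon.
Variable Prim : Type.
Variables lhs rhs : list (clause Prim).
Definition dflt : clause Prim := (ATrue, []).
Definition phi_ (i : nat) : assertion Prim := fst (nth i lhs dflt).
Definition psi_ (j : nat) : assertion Prim := fst (nth j rhs dflt).
Definition avars (i : nat) : list nat := snd (nth i lhs dflt).
Definition bvars (j : nat) : list nat := snd (nth j rhs dflt).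
Definition inV (c : nat) : Prop := exists i, i < length lhs /\ In c (avars i).
Definition Pi (i c : nat) : nat := count_occ Nat.eq_dec (avars i) c.
Definition Om (j c : nat) : nat := count_occ Nat.eq_dec (bvars j) c.
Definition Pi_ge (i j : nat) : Prop := forall c, inV c -> Om j c <= Pi i c.
End Canon.

(* Parametricity Condition (indices 0-based: i < M, j < N) *)
Definition parametricity (Prim : Type) prim_sem (lhs rhs : list (clause Prim)) (eta : env) : Prop :=
  forall (h : heap) (hs : nat -> heap),
    (forall i, i < length lhs -> hsub (hs i) h /\ sem1 prim_sem (phi_ lhs i) eta (hs i)) ->
    (exists i j, i < length lhs /\ j < length rhs /\
        sem1 prim_sem (psi_ rhs j) eta (hs i) /\ Pi_ge lhs rhs i j)
    \/
    (exists j, j < length rhs /\ bvars rhs j = [] /\ sem1 prim_sem (psi_ rhs j) eta h).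

From Stdlib Require Import ZArith List PeanoNat Lia.
From Stdlib Require Import Classical ClassicalEpsilon FunctionalExtensionality ProofIrrelevance.

(* Given [h] and [hs i ⊑ h] with [hs i ∈ [[phi_i]]], we build one
   heap and one interpretation of the assertion variables to which unary validity is
   applied.  Call a variable [c] balanced if [Pi(k)(c) = Omega(l)(c)] for all pairs
   with [Pi(k) >= Omega(l)].  We extend [h] by finitely many fresh "token" locations
   and reserve, for each position of a balanced variable in each conjunct, a nonempty
   piece of the extended heap; a token schedule ensures that pieces of distinct
   conjuncts always share a token.  Interpreting a balanced [c] as "contains a piece
   reserved for an occurrence of [c]" makes the left-hand side true, so some disjunct
   [psi_j * b_j1 * ...] holds.  By (S2) one of its slots is served by a conjunct [i0];
   token sharing forces all balanced slots to be served by [i0], injectively, which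
   with (S1) gives [Pi(i0) >= Omega(j)]; then the [psi_j]-part misses every piece of
   [i0] and so lies inside [hs i0], where [psi_j] holds by monotonicity. *)

Lemma heap_ext (a b : heap) : (forall p, hget a p = hget b p) -> a = b.
Proof.
  destruct a as [fa Ha], b as [fb Hb]; unfold hget; simpl; intro E.
  assert (fa = fb) by (apply functional_extensionality; exact E). subst.
  f_equal; apply proof_irrelevance.
Qed.

Lemma hsub_trans (a b c : heap) : hsub a b -> hsub b c -> hsub a c.
Proof. unfold hsub; auto. Qed.

Definition mk_heap (f : positive -> option Z) (l : list positive)
  (Hl : forall p, f p <> None -> In p l) : heap :=
  exist _ f (ex_intro _ l Hl).

Lemma hfilter_support (X : heap) (P : positive -> Prop) :
  exists l, forall p,
    (if excluded_middle_informative (P p) then hget X p else None) <> None -> In p l.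
Proof.
  destruct (proj2_sig X) as [l Hl]. exists l. intros p Hp.
  destruct (excluded_middle_informative (P p)); [apply Hl; exact Hp | congruence].
Qed.

Definition hfilter (X : heap) (P : positive -> Prop) : heap :=
  exist _ _ (hfilter_support X P).

Lemma hfilter_get (X : heap) (P : positive -> Prop) (p : positive) :
  hget (hfilter X P) p = if excluded_middle_informative (P p) then hget X p else None.
Proof. reflexivity. Qed.

Lemma hfilter_in (X : heap) (P : positive -> Prop) (p : positive) :
  P p -> hget (hfilter X P) p = hget X p.
Proof. rewrite hfilter_get. destruct (excluded_middle_informative (P p)); tauto. Qed.

Lemma hfilter_out (X : heap) (P : positive -> Prop) (p : positive) :
  ~ P p -> hget (hfilter X P) p = None.
Proof. rewrite hfilter_get. destruct (excluded_middle_informative (P p)); tauto. Qed.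

Lemma hfilter_sub (X : heap) (P : positive -> Prop) : hsub (hfilter X P) X.
Proof.
  intros p v. rewrite hfilter_get.
  destruct (excluded_middle_informative (P p)); congruence.
Qed.

Lemma hjoin_support (a b : heap) :
  exists l, forall p,
    match hget a p with Some v => Some v | None => hget b p end <> None -> In p l.
Proof.
  destruct (proj2_sig a) as [la Ha], (proj2_sig b) as [lb Hb]. exists (la ++ lb).
  intros p Hp. apply in_or_app. unfold hget in *.
  destruct (proj1_sig a p) eqn:E; [left; apply Ha; congruence | right; apply Hb; auto].
Qed.

Definition hjoin (a b : heap) : heap := exist _ _ (hjoin_support a b).

Lemma hjoin_get (a b : heap) (p : positive) :
  hget (hjoin a b) p = match hget a p with Some v => Some v | None => hget b p end.
Proof. reflexivity. Qed.

Lemma hunion_get (Y1 Y2 X : heap) (p : positive) (v : Z) :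
  hunion Y1 Y2 X -> (hget X p = Some v <-> hget Y1 p = Some v \/ hget Y2 p = Some v).
Proof.
  intros [Hd Hu]. rewrite Hu.
  destruct (hget Y1 p) eqn:EY; [|intuition congruence].
  destruct (Hd p) as [F|F]; [congruence|]. rewrite F. intuition congruence.
Qed.

Lemma sem_upclosed (Prim : Type) (prim_sem : Prim -> env -> heap -> Prop) (n : nat)
  (rho : nat -> hvec n -> Prop) :
  (forall x, upclosed (rho x)) ->
  forall (a : assertion Prim) (eta : env), upclosed (sem prim_sem rho a eta).
Proof.
  intros Hup a; induction a; intro eta; unfold upclosed in *; intros g h Hs Hsub; simpl in *.
  - destruct Hs as [f [Hf Hk]]. exists f; split; auto. intro k; eapply hsub_trans; eauto.
  - eapply Hup; eauto.
  - auto.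
  - auto.
  - destruct Hs; split; eauto.
  - destruct Hs; [left | right]; eauto.
  - (* enlarge the left factor by everything of [h] outside the right factor *)
    destruct Hs as [f [f' [H1 [H2 H3]]]].
    exists (fun k => hfilter (h k) (fun p => hget (f' k) p = None)), f'.
    split; [|split]; [|exact H2|].
    + eapply IHa1; [exact H1|]. intros k p v Hp.
      destruct (H3 k) as [Hd Hu].
      assert (Ef' : hget (f' k) p = None) by (destruct (Hd p); congruence).
      rewrite hfilter_in by exact Ef'. apply Hsub. rewrite Hu, Hp. reflexivity.
    + intro k. destruct (H3 k) as [Hd Hu]. split.
      * intro p. rewrite hfilter_get.
        destruct (excluded_middle_informative (hget (f' k) p = None)); auto.
      * intro p. rewrite hfilter_get.
        destruct (excluded_middle_informative (hget (f' k) p = None)) as [e|e].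
        -- rewrite e. destruct (hget (h k) p); reflexivity.
        -- destruct (hget (f' k) p) as [w|] eqn:Ew; [|congruence].
           apply Hsub. rewrite Hu. destruct (Hd p) as [F|F]; [rewrite F; exact Ew | congruence].
  - destruct Hs as [v Hv]; exists v; eauto.
  - intro v; eauto.
Qed.

Lemma sem_avar_free (Prim : Type) (prim_sem : Prim -> env -> heap -> Prop) (n : nat)
  (rho rho' : nat -> hvec n -> Prop) (a : assertion Prim) :
  avar_free a -> forall eta h, sem prim_sem rho a eta h <-> sem prim_sem rho' a eta h.
Proof.
  induction a; intros Ha eta h; simpl in *; try tauto.
  - rewrite IHa1, IHa2 by tauto; tauto.
  - rewrite IHa1, IHa2 by tauto; tauto.
  - split; intros [f [g [H1 [H2 H3]]]]; exists f, g;
      (split; [apply IHa1 | split; [apply IHa2 |]]); tauto.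
  - split; intros [v Hv]; exists v; apply IHa; auto.
  - split; intros Hv v; apply IHa; auto.
Qed.

Lemma hvec1_const (v : hvec 1) : v = (fun _ => v Fin.F1).
Proof.
  apply functional_extensionality; intro k.
  apply (Fin.caseS' k); [reflexivity|]. intro p; apply (Fin.case0 (fun _ => _)); exact p.
Qed.

Lemma sem1_star (Prim : Type) (prim_sem : Prim -> env -> heap -> Prop)
  (rho : nat -> hvec 1 -> Prop) (A B : assertion Prim) (eta : env) (X : heap) :
  sem prim_sem rho (AStar A B) eta (fun _ => X) <->
  exists Y1 Y2, sem prim_sem rho A eta (fun _ => Y1) /\ sem prim_sem rho B eta (fun _ => Y2)
     /\ hunion Y1 Y2 X.
Proof.
  simpl; split.
  - intros [f [g [H1 [H2 H3]]]]. exists (f Fin.F1), (g Fin.F1).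
    rewrite (hvec1_const f) in H1; rewrite (hvec1_const g) in H2. auto.
  - intros [Y1 [Y2 [H1 [H2 H3]]]]. exists (fun _ => Y1), (fun _ => Y2). auto.
Qed.

Definition decomp (X g : heap) (fs : nat -> heap) (n : nat) : Prop :=
  (forall r, r < n -> hdisj g (fs r)) /\
  (forall r r', r < n -> r' < n -> r <> r' -> hdisj (fs r) (fs r')) /\
  (forall p v, hget X p = Some v <->
     hget g p = Some v \/ exists r, r < n /\ hget (fs r) p = Some v).

Lemma decomp_ext (X g : heap) (fs fs' : nat -> heap) (n : nat) :
  (forall r, r < n -> fs r = fs' r) -> decomp X g fs n -> decomp X g fs' n.
Proof.
  intros E [D1 [D2 U]]. split; [|split].
  - intros r Hr. rewrite <- E by exact Hr. auto.
  - intros r r' Hr Hr' Hne. rewrite <- !E by assumption. auto.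
  - intros p v. rewrite U. split; intros [A | [r [Hr B]]]; auto;
      right; exists r; [rewrite <- E | rewrite E]; auto.
Qed.

Lemma decomp_0 (X g : heap) (fs : nat -> heap) : decomp X g fs 0 <-> X = g.
Proof.
  split.
  - intros [_ [_ U]]. apply heap_ext. intro p.
    destruct (hget g p) eqn:Eg; [apply U; auto|].
    destruct (hget X p) eqn:EX; [|reflexivity].
    apply U in EX. destruct EX as [F | [r [Hr _]]]; [congruence | lia].
  - intros ->. split; [intros; lia | split; [intros; lia|]].
    intros p v. split; [auto|]. intros [A | [r [Hr _]]]; [exact A | lia].
Qed.

Lemma decomp_S_split (X g : heap) (fs : nat -> heap) (n : nat) :
  decomp X g fs (S n) -> exists Y, decomp Y g fs n /\ hunion Y (fs n) X.
Proof.
  intros [D1 [D2 U]].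
  exists (hfilter X (fun p => hget (fs n) p = None)). split; [split; [|split]|split].
  - intros r Hr. apply D1. lia.
  - intros r r' Hr Hr' Hne. apply D2; lia.
  - intros p v. rewrite hfilter_get.
    destruct (excluded_middle_informative (hget (fs n) p = None)) as [e|e].
    + rewrite U. split.
      * intros [A | [r [Hr B]]]; [left; exact A|].
         destruct (Nat.eq_dec r n) as [->|Hne]; [congruence|].
         right; exists r; split; [lia | exact B].
      * intros [A | [r [Hr B]]]; [left; exact A|]. right; exists r; split; [lia | exact B].
    + split; [congruence|]. intros [A | [r [Hr B]]].
      * destruct (D1 n (Nat.lt_succ_diag_r n) p); congruence.
      * destruct (D2 r n ltac:(lia) ltac:(lia) ltac:(lia) p); congruence.
  - intro p. rewrite hfilter_get.
    destruct (excluded_middle_informative (hget (fs n) p = None)); auto.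
  - intro p. rewrite hfilter_get.
    destruct (excluded_middle_informative (hget (fs n) p = None)) as [e|e].
    + rewrite e. destruct (hget X p); reflexivity.
    + destruct (hget (fs n) p) as [w|] eqn:Ew; [|congruence].
      apply U. right. exists n. split; [lia | exact Ew].
Qed.

Lemma decomp_S_join (X g : heap) (fs : nat -> heap) (n : nat) :
  (exists Y, decomp Y g fs n /\ hunion Y (fs n) X) -> decomp X g fs (S n).
Proof.
  intros [Y [[D1 [D2 U]] HY]].
  assert (Hdisj : forall Z, hsub Z Y -> hdisj Z (fs n)).
  { intros Z HZ p. destruct (proj1 HY p) as [F|F]; [|auto]. left.
    destruct (hget Z p) eqn:E; [apply HZ in E; congruence | reflexivity]. }
  assert (HgY : hsub g Y) by (intros p v E; apply U; auto).
  split; [|split].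
  - intros r Hr. destruct (Nat.eq_dec r n) as [->|Hne]; [apply Hdisj, HgY|].
    apply D1; lia.
  - intros r r' Hr Hr' Hne.
    assert (Hsub : forall r, r < n -> hsub (fs r) Y)
      by (intros k Hk p v E; apply U; right; exists k; auto).
    destruct (Nat.eq_dec r n) as [->|Hrn]; destruct (Nat.eq_dec r' n) as [->|Hr'n].
    + congruence.
    + intro p. destruct (Hdisj _ (Hsub r' ltac:(lia)) p); auto.
    + apply Hdisj, Hsub. lia.
    + apply D2; lia.
  - intros p v. rewrite (hunion_get _ _ _ _ _ HY), U. split.
    + intros [[A | [r [Hr B]]] | B]; [left; exact A | right; exists r; split; [lia | exact B]|].
      right; exists n; split; [lia | exact B].
    + intros [A | [r [Hr B]]]; [left; left; exact A|].
      destruct (Nat.eq_dec r n) as [->|Hne]; [right; exact B|].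
      left; right; exists r; split; [lia | exact B].
Qed.

Lemma sem1_star_vars (Prim : Type) (prim_sem : Prim -> env -> heap -> Prop)
  (rho : nat -> hvec 1 -> Prop) (eta : env) (c : clause Prim) (X : heap) :
  sem prim_sem rho (star_vars c) eta (fun _ => X) <->
  exists g fs, sem prim_sem rho (fst c) eta (fun _ => g) /\
    (forall r, r < length (snd c) -> rho (nth r (snd c) 0) (fun _ => fs r)) /\
    decomp X g fs (length (snd c)).
Proof.
  destruct c as [phi l]. unfold star_vars; simpl. revert X.
  induction l as [|a l IH] using rev_ind; intro X; simpl.
  - split.
    + intro Hs. exists X, (fun _ => X). split; [exact Hs | split; [intros; lia|]].
      apply decomp_0. reflexivity.
    + intros [g [fs [Hg [_ Hd]]]]. apply decomp_0 in Hd. subst. exact Hg.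
  - rewrite fold_left_app, length_app. cbn [fold_left length].
    rewrite Nat.add_1_r, sem1_star. split.
    + intros [Y1 [Y2 [HY1 [HY2 HU]]]]. apply IH in HY1.
      destruct HY1 as [g [fs [Hg [Hfs Hd]]]].
      exists g, (fun r => if r =? length l then Y2 else fs r). split; [exact Hg | split].
      * intros r Hr. destruct (Nat.eqb_spec r (length l)) as [->|Hne].
        -- rewrite app_nth2, Nat.sub_diag by lia. exact HY2.
        -- rewrite app_nth1 by lia. apply Hfs. lia.
      * apply decomp_S_join. exists Y1. rewrite Nat.eqb_refl. split; [|exact HU].
        apply (decomp_ext _ _ fs); [|exact Hd].
        intros r Hr. destruct (Nat.eqb_spec r (length l)); [lia | reflexivity].
    + intros [g [fs [Hg [Hfs Hd]]]]. apply decomp_S_split in Hd. destruct Hd as [Y [Hd HU]].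
      exists Y, (fs (length l)). split; [|split; [|exact HU]].
      * apply IH. exists g, fs. split; [exact Hg | split; [|exact Hd]].
        intros r Hr. specialize (Hfs r ltac:(lia)). rewrite app_nth1 in Hfs by lia. exact Hfs.
      * specialize (Hfs (length l) ltac:(lia)).
        rewrite app_nth2, Nat.sub_diag in Hfs by lia. exact Hfs.
Qed.

Lemma decomp_piece_unique (X g : heap) (fs : nat -> heap) (n r r' : nat)
  (p : positive) (v w : Z) :
  decomp X g fs n -> r < n -> r' < n ->
  hget (fs r) p = Some v -> hget (fs r') p = Some w -> r = r'.
Proof.
  intros [_ [D _]] Hr Hr' Ev Ew. destruct (Nat.eq_dec r r') as [|Hne]; [assumption|].
  destruct (D r r' Hr Hr' Hne p); congruence.
Qed.

Lemma decomp_filter (X : heap) (Q : nat -> positive -> Prop) (n : nat) :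
  (forall p k k', k < n -> k' < n -> Q k p -> Q k' p -> k = k') ->
  decomp X (hfilter X (fun p => ~ exists k, k < n /\ Q k p)) (fun k => hfilter X (Q k)) n.
Proof.
  intro Hexcl. split; [|split].
  - intros k Hk p. destruct (classic (Q k p)) as [Hq|Hq].
    + left. apply hfilter_out. intro F. apply F. exists k. auto.
    + right. apply hfilter_out. exact Hq.
  - intros k k' Hk Hk' Hne p. destruct (classic (Q k p)) as [Hq|Hq].
    + right. apply hfilter_out. intro Hq'. apply Hne. exact (Hexcl p k k' Hk Hk' Hq Hq').
    + left. apply hfilter_out. exact Hq.
  - intros p v. split.
    + intro E. destruct (classic (exists k, k < n /\ Q k p)) as [[k [Hk Hq]]|C].
      * right. exists k. split; [exact Hk|]. rewrite hfilter_in; assumption.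
      * left. rewrite hfilter_in; assumption.
    + intros [E | [k [_ E]]]; eapply hfilter_sub; eauto.
Qed.

Lemma big_and_intro (Prim : Type) (prim_sem : Prim -> env -> heap -> Prop) (n : nat)
  (rho : nat -> hvec n -> Prop) (eta : env) (h : hvec n) (l : list (assertion Prim)) :
  (forall a, In a l -> sem prim_sem rho a eta h) -> sem prim_sem rho (big_and l) eta h.
Proof.
  induction l as [|x l IH]; intro Hl; simpl; [auto|].
  destruct l as [|y l]; [apply Hl; simpl; auto|].
  split; [apply Hl; simpl; auto|]. apply IH. intros a Ha; apply Hl; simpl in *; tauto.
Qed.

Lemma big_or_elim (Prim : Type) (prim_sem : Prim -> env -> heap -> Prop) (n : nat)
  (rho : nat -> hvec n -> Prop) (eta : env) (h : hvec n) (l : list (assertion Prim)) :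
  sem prim_sem rho (big_or l) eta h -> exists a, In a l /\ sem prim_sem rho a eta h.
Proof.
  induction l as [|x l IH]; intro Hl; simpl in *; [contradiction|].
  destruct l as [|y l]; [exists x; auto|].
  destruct Hl as [Hl|Hl]; [exists x; auto|].
  destruct (IH Hl) as [a [A B]]; exists a; simpl in *; auto.
Qed.

Lemma canon_lhs_intro (Prim : Type) (prim_sem : Prim -> env -> heap -> Prop) (n : nat)
  (rho : nat -> hvec n -> Prop) (eta : env) (h : hvec n) (lhs : list (clause Prim)) :
  (forall i, i < length lhs -> sem prim_sem rho (star_vars (nth i lhs (dflt Prim))) eta h) ->
  sem prim_sem rho (canon_lhs lhs) eta h.
Proof.
  intro Hi. apply big_and_intro. intros a Ha.
  apply in_map_iff in Ha. destruct Ha as [cl [<- Hcl]].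
  destruct (In_nth _ _ (dflt Prim) Hcl) as [i [Hlt <-]]. auto.
Qed.

Lemma canon_rhs_elim (Prim : Type) (prim_sem : Prim -> env -> heap -> Prop) (n : nat)
  (rho : nat -> hvec n -> Prop) (eta : env) (h : hvec n) (rhs : list (clause Prim)) :
  sem prim_sem rho (canon_rhs rhs) eta h ->
  exists j, j < length rhs /\ sem prim_sem rho (star_vars (nth j rhs (dflt Prim))) eta h.
Proof.
  intro Hs. apply big_or_elim in Hs. destruct Hs as [a [Ha Hs]].
  apply in_map_iff in Ha. destruct Ha as [cl [<- Hcl]].
  destruct (In_nth _ _ (dflt Prim) Hcl) as [j [Hlt <-]]. eauto.
Qed.

Definition positions (l : list nat) (c : nat) : list nat :=
  filter (fun r => Nat.eqb (nth r l 0) c) (seq 0 (length l)).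

Lemma in_positions (l : list nat) (c r : nat) :
  In r (positions l c) <-> r < length l /\ nth r l 0 = c.
Proof. unfold positions. rewrite filter_In, in_seq, Nat.eqb_eq. lia. Qed.

Lemma filter_nth_shift (a : nat) (l : list nat) (c : nat) (s : list nat) :
  length (filter (fun r => nth r (a :: l) 0 =? c) (map S s)) =
  length (filter (fun r => nth r l 0 =? c) s).
Proof. induction s as [|x s IH]; simpl; [reflexivity|]. destruct (nth x l 0 =? c); simpl; auto. Qed.

Lemma length_positions (l : list nat) (c : nat) :
  length (positions l c) = count_occ Nat.eq_dec l c.
Proof.
  induction l as [|a l IH]; [reflexivity|].
  unfold positions. change (length (a :: l)) with (S (length l)).
  rewrite <- cons_seq, <- seq_shift. cbn [filter].
  change (nth 0 (a :: l) 0) with a. simpl count_occ.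
  destruct (Nat.eq_dec a c) as [<-|Hne].
  - rewrite Nat.eqb_refl. cbn [length]. rewrite filter_nth_shift. f_equal. exact IH.
  - rewrite (proj2 (Nat.eqb_neq a c) Hne), filter_nth_shift. exact IH.
Qed.

Lemma count_occ_injection (la lb : list nat) (c : nat) (f : nat -> nat) :
  (forall r, r < length lb -> nth r lb 0 = c -> f r < length la /\ nth (f r) la 0 = c) ->
  (forall r r', r < length lb -> r' < length lb -> nth r lb 0 = c -> nth r' lb 0 = c ->
     f r = f r' -> r = r') ->
  count_occ Nat.eq_dec lb c <= count_occ Nat.eq_dec la c /\
  (count_occ Nat.eq_dec lb c = count_occ Nat.eq_dec la c ->
   forall k, k < length la -> nth k la 0 = c ->
   exists r, r < length lb /\ nth r lb 0 = c /\ f r = k).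
Proof.
  intros Hf Hinj.
  assert (Hnodup : NoDup (map f (positions lb c))).
  { apply NoDup_map_NoDup_ForallPairs; [|apply NoDup_filter, seq_NoDup].
    intros x y Hx Hy E. apply in_positions in Hx, Hy. apply Hinj; tauto. }
  assert (Hincl : incl (map f (positions lb c)) (positions la c)).
  { intros k Hk. apply in_map_iff in Hk. destruct Hk as [r [<- Hr]].
    apply in_positions in Hr. apply in_positions. apply Hf; tauto. }
  rewrite <- !length_positions. split.
  - rewrite <- (length_map f). apply NoDup_incl_length; assumption.
  - intros E k Hk Hk'.
    assert (Hincl' : incl (positions la c) (map f (positions lb c)))
      by (apply NoDup_length_incl; [assumption | rewrite length_map; lia | assumption]).
    assert (Hin : In k (positions la c)) by (apply in_positions; auto).
    apply Hincl', in_map_iff in Hin. destruct Hin as [r [Er Hr]]. apply in_positions in Hr.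
    exists r. tauto.
Qed.

(* Given a relation [P i k] ("position [k] of clause [i] is
   admissible") on indices below [W], we build finitely many tokens [n < ntokens W]
   and, for each clause [i], an admissible position [schedule P W n i] for token [n],
   such that every pair of admissible positions in distinct clauses is hit
   simultaneously by some token. *)
Section Schedule.
Variable P : nat -> nat -> Prop.
Variable W : nat.
Hypothesis P_bounded : forall i k, P i k -> i < W /\ k < W.

Definition quads : list ((nat * nat) * (nat * nat)) :=
  list_prod (list_prod (seq 0 W) (seq 0 W)) (list_prod (seq 0 W) (seq 0 W)).

Definition ntokens : nat := length quads.

Definition default_pos (i : nat) : nat := epsilon (inhabits 0) (P i).

(* token [n] encodes a quadruple [(a, b, a', b')] and requests position [b] of
   clause [a] and position [b'] of clause [a'] *)
Definition schedule (n i : nat) : nat :=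
  let '((a, b), (a', b')) := nth n quads ((0, 0), (0, 0)) in
  let cand := if a =? i then b else if a' =? i then b' else default_pos i in
  if excluded_middle_informative (P i cand) then cand else default_pos i.

Lemma default_pos_spec (i : nat) : (exists k, P i k) -> P i (default_pos i).
Proof. apply epsilon_spec. Qed.

Lemma schedule_admissible (n i : nat) : (exists k, P i k) -> P i (schedule n i).
Proof.
  intro Hi. unfold schedule. destruct (nth n quads _) as [[a b] [a' b']].
  destruct (excluded_middle_informative _); [assumption | apply default_pos_spec, Hi].
Qed.

Lemma quads_complete (a b a' b' : nat) : a < W -> b < W -> a' < W -> b' < W ->
  exists n, n < ntokens /\ nth n quads ((0, 0), (0, 0)) = ((a, b), (a', b')).
Proof. intros. apply In_nth. unfold quads. rewrite !in_prod_iff, !in_seq. lia. Qed.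

Lemma schedule_pairs (i i' k k' : nat) : i <> i' -> P i k -> P i' k' ->
  exists n, n < ntokens /\ schedule n i = k /\ schedule n i' = k'.
Proof.
  intros Hne Hk Hk'. destruct (P_bounded _ _ Hk), (P_bounded _ _ Hk').
  destruct (quads_complete i k i' k') as [n [Hn E]]; try assumption.
  exists n. split; [exact Hn|].
  unfold schedule; rewrite E, !Nat.eqb_refl, (proj2 (Nat.eqb_neq i i') Hne).
  split; (destruct (excluded_middle_informative _); [reflexivity | contradiction]).
Qed.

Lemma schedule_covers (i k : nat) : P i k -> exists n, n < ntokens /\ schedule n i = k.
Proof.
  intro Hk. destruct (P_bounded _ _ Hk).
  destruct (quads_complete i k i k) as [n [Hn E]]; try assumption.
  exists n. split; [exact Hn|]. unfold schedule; rewrite E, Nat.eqb_refl.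
  destruct (excluded_middle_informative _); [reflexivity | contradiction].
Qed.
End Schedule.

Lemma le_list_max (x : nat) (l : list nat) : In x l -> x <= list_max l.
Proof.
  intro Hx. assert (Hle := proj1 (list_max_le l _) (le_n _)).
  rewrite Forall_forall in Hle. exact (Hle x Hx).
Qed.

Lemma fresh_locations (h : heap) :
  exists tok : nat -> positive,
    (forall n m, tok n = tok m -> n = m) /\ forall n, hget h (tok n) = None.
Proof.
  destruct (proj2_sig h) as [l Hl].
  set (bound := list_max (map Pos.to_nat l)).
  exists (fun n => Pos.of_nat (S bound + n)). split.
  - intros n m E. apply Nat2Pos.inj in E; lia.
  - intro n. destruct (hget h _) eqn:E; [|reflexivity]. exfalso.
    assert (Hin : In (Pos.of_nat (S bound + n)) l)
      by (apply Hl; unfold hget in E; rewrite E; discriminate).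
    apply (in_map Pos.to_nat), le_list_max in Hin. rewrite Nat2Pos.id in Hin by lia.
    unfold bound in Hin. lia.
Qed.

Section Witness.
Variable Prim : Type.
Variable prim_sem : Prim -> env -> heap -> Prop.
Variables lhs rhs : list (clause Prim).
Variable eta : env.

Definition balanced (c : nat) : Prop :=
  inV lhs c /\ forall k l, k < length lhs -> l < length rhs -> Pi_ge lhs rhs k l ->
    Pi lhs k c = Om rhs l c.

Definition admissible (i k : nat) : Prop :=
  i < length lhs /\ k < length (avars lhs i) /\ balanced (nth k (avars lhs i) 0).

Definition width : nat :=
  S (length lhs + list_max (map (fun c : clause Prim => length (snd c)) lhs)).

Lemma admissible_bounded (i k : nat) : admissible i k -> i < width /\ k < width.
Proof.
  intros [Hi [Hk _]]. unfold width.
  assert (length (avars lhs i) <= list_max (map (fun c : clause Prim => length (snd c)) lhs))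
    by apply le_list_max, (in_map (fun c : clause Prim => length (snd c))), nth_In, Hi.
  lia.
Qed.

Local Notation ntok := (ntokens width).
Local Notation sched := (schedule admissible width).
Local Notation dpos := (default_pos admissible).

Variable h : heap.
Variable hs : nat -> heap.
Variable tok : nat -> positive.
Hypothesis tok_inj : forall n m, tok n = tok m -> n = m.
Hypothesis tok_fresh : forall n, hget h (tok n) = None.

Definition is_token (p : positive) : Prop := exists n, n < ntok /\ tok n = p.

Lemma token_support (p : positive) :
  (if excluded_middle_informative (is_token p) then Some 0%Z else None) <> None ->
  In p (map tok (seq 0 ntok)).
Proof.
  destruct (excluded_middle_informative (is_token p)) as [[n [Hn <-]]|]; [|congruence].
  intros _. apply in_map, in_seq. lia.
Qed.

Definition ext_heap : heap := hjoin h (mk_heap _ _ token_support).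

Lemma ext_heap_token (n : nat) : n < ntok -> hget ext_heap (tok n) = Some 0%Z.
Proof.
  intro Hn. unfold ext_heap. rewrite hjoin_get, tok_fresh. simpl.
  destruct (excluded_middle_informative (is_token (tok n))) as [|F]; [reflexivity|].
  exfalso; apply F; exists n; auto.
Qed.

Lemma h_not_token (p : positive) : hget h p <> None -> ~ is_token p.
Proof. intros Hp [n [_ <-]]. apply Hp, tok_fresh. Qed.

Lemma ext_heap_not_token (p : positive) : ~ is_token p -> hget ext_heap p = hget h p.
Proof.
  intro Hp. unfold ext_heap. rewrite hjoin_get. simpl.
  destruct (hget h p); [reflexivity|].
  destruct (excluded_middle_informative (is_token p)); [contradiction | reflexivity].
Qed.

Definition in_piece (i k : nat) (p : positive) : Prop :=
  (exists n, n < ntok /\ tok n = p /\ sched n i = k) \/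
  (~ is_token p /\ k = dpos i /\ hget (hs i) p = None).

Definition piece (i k : nat) : heap := hfilter ext_heap (in_piece i k).

Lemma in_piece_unique (i k k' : nat) (p : positive) :
  in_piece i k p -> in_piece i k' p -> k = k'.
Proof.
  intros [[n [Hn [<- <-]]] | [T [-> _]]] [[n' [Hn' [E <-]]] | [T' [-> _]]].
  - apply tok_inj in E. subst. reflexivity.
  - exfalso. apply T'. exists n. auto.
  - exfalso. apply T. exists n'. auto.
  - reflexivity.
Qed.

Lemma piece_token (n i : nat) : n < ntok -> hget (piece i (sched n i)) (tok n) = Some 0%Z.
Proof.
  intro Hn. unfold piece. rewrite hfilter_in by (left; exists n; auto).
  apply ext_heap_token, Hn.
Qed.

Lemma piece_nonempty (i k : nat) : admissible i k -> exists p, hget (piece i k) p = Some 0%Z.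
Proof.
  intro Hk. destruct (schedule_covers _ _ admissible_bounded _ _ Hk) as [n [Hn <-]].
  exists (tok n). apply piece_token, Hn.
Qed.

Lemma pieces_overlap (i i' k k' : nat) : i <> i' -> admissible i k -> admissible i' k' ->
  exists p, hget (piece i k) p = Some 0%Z /\ hget (piece i' k') p = Some 0%Z.
Proof.
  intros Hne Hk Hk'.
  destruct (schedule_pairs _ _ admissible_bounded _ _ _ _ Hne Hk Hk') as [n [Hn [<- <-]]].
  exists (tok n). split; apply piece_token, Hn.
Qed.

Lemma pieces_cover (i : nat) (p : positive) (v : Z) : (exists k, admissible i k) ->
  hget ext_heap p = Some v -> hget (hs i) p = None ->
  exists k, admissible i k /\ hget (piece i k) p = Some v.
Proof.
  intros Hi Ev Ehs. unfold piece.
  destruct (classic (is_token p)) as [[n [Hn <-]] | T].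
  - exists (sched n i). split; [apply schedule_admissible, Hi|].
    rewrite hfilter_in by (left; exists n; auto). exact Ev.
  - exists (dpos i). split; [apply default_pos_spec, Hi|].
    rewrite hfilter_in by (right; auto). exact Ev.
Qed.

Definition claims (c : nat) (Y : heap) : Prop :=
  balanced c -> exists i k, i < length lhs /\ k < length (avars lhs i) /\
    nth k (avars lhs i) 0 = c /\ hsub (piece i k) Y.

Definition rho_w (x : nat) (v : hvec 1) : Prop := claims x (v Fin.F1).

Lemma rho_w_upclosed (x : nat) : upclosed (rho_w x).
Proof.
  intros Y Y' HY Hsub Hc. destruct (HY Hc) as [i [k [Hi [Hk [Ec Hp]]]]].
  exists i, k. repeat split; try assumption. eapply hsub_trans; eauto.
Qed.

Hypothesis hs_spec : forall i, i < length lhs ->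
  hsub (hs i) h /\ sem1 prim_sem (phi_ lhs i) eta (hs i).
Hypothesis phi_avar_free : forall c, In c lhs -> avar_free (fst c).

(* Under [rho_w], the extended heap satisfies the left-hand side: in conjunct [i]
   each admissible position receives its piece, and [phi_i] gets the rest,
   which contains [hs i]. *)
Lemma lhs_holds : sem prim_sem rho_w (canon_lhs lhs) eta (fun _ => ext_heap).
Proof.
  apply canon_lhs_intro. intros i Hi. apply sem1_star_vars.
  set (Q k p := admissible i k /\ in_piece i k p).
  exists (hfilter ext_heap (fun p => ~ exists k, k < length (avars lhs i) /\ Q k p)),
         (fun k => hfilter ext_heap (Q k)).
  split; [|split].
  - destruct (hs_spec i Hi) as [Hhs Hphi].
    apply (sem_avar_free _ _ _ (fun _ _ => True)); [apply phi_avar_free, nth_In, Hi|].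
    apply (sem_upclosed _ _ _ _ (fun _ _ _ _ _ => I) _ _ _ _ Hphi).
    intros _ p v Ep. assert (Eh := Hhs p v Ep).
    assert (T : ~ is_token p) by (apply h_not_token; congruence).
    rewrite hfilter_in.
    + rewrite ext_heap_not_token by exact T. exact Eh.
    + intros [k [_ [_ [[n [_ [<- _]]] | [_ [_ F]]]]]]; [rewrite tok_fresh in Eh | ]; congruence.
  - intros k Hk Hbal. exists i, k. split; [exact Hi | split; [exact Hk | split; [reflexivity|]]].
    intros p v Ep. unfold piece in Ep. rewrite hfilter_get in Ep.
    destruct (excluded_middle_informative (in_piece i k p)) as [Hp|]; [|discriminate].
    rewrite hfilter_in; [exact Ep | split; [split; [exact Hi | split; assumption] | exact Hp]].
  - apply decomp_filter. intros p k k' _ _ [_ Hp] [_ Hp']. exact (in_piece_unique _ _ _ _ Hp Hp').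
Qed.

Hypothesis S1 : forall i j, i < length lhs -> j < length rhs -> ~ Pi_ge lhs rhs i j ->
  exists c, balanced c /\ Pi lhs i c < Om rhs j c.
Hypothesis S2 : forall j, j < length rhs -> exists c, balanced c /\ 0 < Om rhs j c.

Section Matching.
Variable j : nat.
Variable g : heap.
Variable fs : nat -> heap.
Local Notation lb := (bvars rhs j).
Hypothesis j_lt : j < length rhs.
Hypothesis fs_claims : forall r, r < length lb -> claims (nth r lb 0) (fs r).
Hypothesis ext_decomp : decomp ext_heap g fs (length lb).

Definition serves (i r k : nat) : Prop :=
  k < length (avars lhs i) /\ nth k (avars lhs i) 0 = nth r lb 0 /\ hsub (piece i k) (fs r).

Section Anchor.
Variables i0 r0 k0 : nat.
Hypothesis r0_lt : r0 < length lb.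
Hypothesis k0_admissible : admissible i0 k0.
Hypothesis k0_serves : serves i0 r0 k0.

(* Every slot with a balanced variable is served by conjunct [i0]: a piece of
   another conjunct would share a token with the piece in slot [r0]. *)
Lemma anchor_serves_all (r : nat) : r < length lb -> balanced (nth r lb 0) ->
  exists k, serves i0 r k.
Proof.
  intros Hr Hbal. destruct (Nat.eq_dec r r0) as [->|Hne]; [exists k0; exact k0_serves|].
  destruct (fs_claims r Hr Hbal) as [i [k [Hi [Hk [Ek Hsub]]]]].
  destruct (Nat.eq_dec i i0) as [->|Hii]; [exists k; repeat split; assumption|].
  exfalso. apply Hne.
  assert (Hadm : admissible i k)
    by (split; [exact Hi | split; [exact Hk | rewrite Ek; exact Hbal]]).
  destruct (pieces_overlap _ _ _ _ Hii Hadm k0_admissible) as [p [E1 E2]].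
  destruct k0_serves as [_ [_ Hsub0]].
  exact (decomp_piece_unique _ _ _ _ _ _ _ _ _ ext_decomp Hr r0_lt (Hsub _ _ E1) (Hsub0 _ _ E2)).
Qed.

Definition match_pos (r : nat) : nat := epsilon (inhabits 0) (serves i0 r).

Lemma match_pos_serves (r : nat) : r < length lb -> balanced (nth r lb 0) ->
  serves i0 r (match_pos r).
Proof. intros Hr Hbal. unfold match_pos. apply epsilon_spec, anchor_serves_all; assumption. Qed.

(* [match_pos] is injective (pieces are nonempty and slots disjoint), so every
   balanced [c] occurs at least as often in conjunct [i0] as in the disjunct, and
   when equally often every occurrence in [i0] serves some slot. *)
Lemma match_pos_count (c : nat) : balanced c ->
  count_occ Nat.eq_dec lb c <= count_occ Nat.eq_dec (avars lhs i0) c /\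
  (count_occ Nat.eq_dec lb c = count_occ Nat.eq_dec (avars lhs i0) c ->
   forall k, k < length (avars lhs i0) -> nth k (avars lhs i0) 0 = c ->
   exists r, r < length lb /\ nth r lb 0 = c /\ match_pos r = k).
Proof.
  intro Hbal. apply count_occ_injection.
  - intros r Hr Er. rewrite <- Er in Hbal.
    destruct (match_pos_serves r Hr Hbal) as [Hk [E _]]. split; congruence.
  - intros r r' Hr Hr' Er Er' Em.
    rewrite <- Er in Hbal. rewrite <- Er' in Er.
    destruct (match_pos_serves r Hr Hbal) as [Hk [E Hsub]].
    destruct (match_pos_serves r' Hr' ltac:(rewrite <- Er; exact Hbal)) as [_ [_ Hsub']].
    assert (Hadm : admissible i0 (match_pos r))
      by (split; [apply k0_admissible | split; [exact Hk | rewrite E; exact Hbal]]).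
    destruct (piece_nonempty _ _ Hadm) as [p Hp]. rewrite <- Em in Hsub'.
    exact (decomp_piece_unique _ _ _ _ _ _ _ _ _ ext_decomp Hr Hr' (Hsub _ _ Hp) (Hsub' _ _ Hp)).
Qed.

Lemma anchor_Pi_ge : Pi_ge lhs rhs i0 j.
Proof.
  apply NNPP. intro Hn.
  destruct (S1 i0 j (proj1 k0_admissible) j_lt Hn) as [c [Hbal Hlt]].
  destruct (match_pos_count c Hbal) as [Hle _]. unfold Pi, Om in Hlt. lia.
Qed.

(* Hence balanced counts agree, and every admissible piece of [i0] lies in a slot. *)
Lemma anchor_pieces_in_slots (k : nat) : admissible i0 k ->
  exists r, r < length lb /\ hsub (piece i0 k) (fs r).
Proof.
  intros [Hi [Hk Hbal]].
  assert (Eq : Pi lhs i0 (nth k (avars lhs i0) 0) = Om rhs j (nth k (avars lhs i0) 0))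
    by exact (proj2 Hbal i0 j Hi j_lt anchor_Pi_ge).
  destruct (match_pos_count _ Hbal) as [_ Hsurj].
  destruct (Hsurj (eq_sym Eq) k Hk eq_refl) as [r [Hr [Er <-]]].
  exists r. split; [exact Hr|]. rewrite <- Er in Hbal. apply (match_pos_serves r Hr Hbal).
Qed.

(* The [psi_j]-part [g] avoids all slots, hence all pieces of [i0], hence lies in [hs i0]. *)
Lemma anchor_contains_rest : hsub g (hs i0).
Proof.
  destruct ext_decomp as [Hdisj [_ Hunion]].
  intros p v Ep. assert (Ev : hget ext_heap p = Some v) by (apply Hunion; left; exact Ep).
  destruct (hget (hs i0) p) as [w|] eqn:Ew.
  - assert (Eh : hget h p = Some w) by (apply (hs_spec i0 (proj1 k0_admissible)), Ew).
    rewrite ext_heap_not_token in Ev by (apply h_not_token; congruence). congruence.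
  - exfalso.
    destruct (pieces_cover i0 p v (ex_intro _ k0 k0_admissible) Ev Ew) as [k [Hk Hp]].
    destruct (anchor_pieces_in_slots k Hk) as [r [Hr Hsub]].
    destruct (Hdisj r Hr p) as [F|F]; [congruence|]. rewrite (Hsub _ _ Hp) in F. discriminate.
Qed.
End Anchor.

(* By (S2) the disjunct has a balanced slot, which some conjunct serves. *)
Lemma disjunct_matches_conjunct :
  exists i0, i0 < length lhs /\ Pi_ge lhs rhs i0 j /\ hsub g (hs i0).
Proof.
  destruct (S2 j j_lt) as [c [Hbal Hpos]].
  apply (count_occ_In Nat.eq_dec) in Hpos. destruct (In_nth _ _ 0 Hpos) as [r0 [Hr0 Er0]].
  rewrite <- Er0 in Hbal.
  destruct (fs_claims r0 Hr0 Hbal) as [i0 [k0 [Hi0 [Hk0 [Ek0 Hsub]]]]].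
  assert (Hadm : admissible i0 k0)
    by (split; [exact Hi0 | split; [exact Hk0 | rewrite Ek0; exact Hbal]]).
  assert (Hserves : serves i0 r0 k0) by (repeat split; assumption).
  exists i0. split; [exact Hi0 | split].
  - exact (anchor_Pi_ge i0 r0 k0 Hr0 Hadm Hserves).
  - exact (anchor_contains_rest i0 r0 k0 Hr0 Hadm Hserves).
Qed.
End Matching.
End Witness.

Theorem mainTheorem5 (Prim : Type) (prim_sem : Prim -> env -> heap -> Prop)
  (lhs rhs : list (clause Prim)) (eta : env) :
  canonical lhs rhs ->
  (* (S1) *)
  (forall i j, i < length lhs -> j < length rhs -> ~ Pi_ge lhs rhs i j ->
     exists c, inV lhs c /\ Pi lhs i c < Om rhs j c /\
       (forall k l, k < length lhs -> l < length rhs -> Pi_ge lhs rhs k l ->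
          Pi lhs k c = Om rhs l c)) ->
  (* (S2) *)
  (forall j, j < length rhs ->
     exists c, inV lhs c /\ 0 < Om rhs j c /\
       (forall k l, k < length lhs -> l < length rhs -> Pi_ge lhs rhs k l ->
          Pi lhs k c = Om rhs l c)) ->
  unary_valid prim_sem (canon_lhs lhs) (canon_rhs rhs) eta ->
  parametricity prim_sem lhs rhs eta.
Proof.
  intros [_ [Hphi [Hpsi _]]] HS1 HS2 Hvalid h hs Hhs.
  (* (S2) rules out empty disjuncts, so the first alternative is the one to prove *)
  left.
  assert (S1 : forall i j, i < length lhs -> j < length rhs -> ~ Pi_ge lhs rhs i j ->
                 exists c, balanced Prim lhs rhs c /\ Pi lhs i c < Om rhs j c).
  { intros i j Hi Hj Hn. destruct (HS1 i j Hi Hj Hn) as [c [? [? ?]]].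
    exists c. repeat split; assumption. }
  assert (S2 : forall j, j < length rhs ->
                 exists c, balanced Prim lhs rhs c /\ 0 < Om rhs j c).
  { intros j Hj. destruct (HS2 j Hj) as [c [? [? ?]]]. exists c. repeat split; assumption. }
  destruct (fresh_locations h) as [tok [Htok_inj Htok_fresh]].
  assert (Hrhs := Hvalid _ (rho_w_upclosed Prim lhs rhs h hs tok) _
                    (lhs_holds Prim prim_sem lhs rhs eta h hs tok Htok_inj Htok_fresh Hhs Hphi)).
  destruct (canon_rhs_elim _ _ _ _ _ _ _ Hrhs) as [j [Hj Hsj]].
  apply sem1_star_vars in Hsj. destruct Hsj as [g [fs [Hg [Hfs Hdec]]]].
  destruct (disjunct_matches_conjunct Prim prim_sem lhs rhs eta h hs tok Htok_inj Htok_fresh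
              Hhs S1 S2 j g fs Hj Hfs Hdec) as [i0 [Hi0 [Hge Hsub]]].
  exists i0, j. split; [exact Hi0 | split; [exact Hj | split; [|exact Hge]]].
  apply (sem_upclosed _ _ _ _ (fun _ _ _ _ _ => I) _ _ (fun _ => g)); [|intros _; exact Hsub].
  apply (sem_avar_free _ _ _ _ (rho_w Prim lhs rhs h hs tok)); [apply Hpsi, nth_In, Hj | exact Hg].
Qed.
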